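(* For any digraph $G$, \[1+\mathrm{cr}(G)=\mathrm{lifo}_{\mathtt{mi}}(G)=\mathrm{lifo}_{\mathtt{i}}(G)=\mathrm{lifo}_{\mathtt{misc}}(G)=\mathrm{lifo}_{\mathtt{isc}}(G)=\mathrm{lifo}_{\mathtt{mv}}(G)=\mathrm{lifo}_{\mathtt{v}}(G)=\mathrm{lifo}_{\mathtt{mvsc}}(G)=\mathrm{lifo}_{\mathtt{vsc}}(G)=\mathrm{sstat}_{\mathtt{vsc}}(G).\]
   Context: All digraphs are finite, simple, without self-loops and have at least one vertex (induced subgraphs appearing as game data may be empty). For a finite set $V$, $V^*$ is the set of finite words over $V$, $\epsilon$ the empty word; $X \preceq Y$ means $X$ is a prefix of $Y$; for $X=a_1\cdots a_n$, $|X|=n$ and $\mathrm{let}(X)=\{a_1,\dots,a_n\}$. $A\Delta B$ is symmetric difference. For $X\subseteq V(G)$, $G\setminus X$ is the subgraph induced by $V(G)\setminus X$. Induced subgraphs are identified with their vertex sets. An initial component of a digraph $H$ is a strongly connected component $C$ with no edge from $H\setminus C$ into $C$. A subgraph $H\subseteq G$ is successor-closed if there is no edge of $G$ from $H$ to $G\setminus H$. Cycle-rank $\mathrm{cr}(G)$: $0$ if $G$ is acyclic; $1+\min_{v\in V(G)}\mathrm{cr}(G\setminus\{v\})$ if $G$ is strongly connected (and not acyclic); otherwise the maximum of $\mathrm{cr}(H)$ over strongly connected components $H$ of $G$. LIFO-search game. A position is a pair $(X,R)$ with $X\in V(G)^*$ and $R$ a (possibly empty) induced subgraph of $G\setminus\mathrm{let}(X)$.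 It is an $\mathtt{i}$-position if $R$ is successor-closed; an $\mathtt{isc}$-position if $R$ is a union of strongly connected components of $G\setminus\mathrm{let}(X)$; a $\mathtt{v}$-position if $R$ is successor-closed and has a unique initial component; a $\mathtt{vsc}$-position if $R$ is a strongly connected component of $G\setminus\mathrm{let}(X)$. For $\mathbf{gv}\in\{\mathtt{i},\mathtt{isc},\mathtt{v},\mathtt{vsc}\}$, a $\mathbf{gv}$-position $(X',R')$ is a $\mathbf{gv}$-successor of $(X,R)$ if ($X\preceq X'$ or $X'\preceq X$), $|\mathrm{let}(X)\Delta\mathrm{let}(X')|=1$, and: for $\mathbf{gv}\in\{\mathtt{i},\mathtt{v}\}$, every $v'\in R'$ is reachable by a directed path in $G\setminus(\mathrm{let}(X)\cap\mathrm{let}(X'))$ from some $v\in R$; for $\mathbf{gv}\in\{\mathtt{isc},\mathtt{vsc}\}$, every $v'\in R'$ lies in the same strongly connected component of $G\setminus(\mathrm{let}(X)\cap\mathrm{let}(X'))$ as some $v\in R$. For $\mathbf{gv}\in\{\mathtt{v},\mathtt{vsc}\}$, if $(\epsilon,G)$ is not a $\mathbf{gv}$-position it is nevertheless admitted as a special position whose $\mathbf{gv}$-successors are exactly the $\mathbf{gv}$-positions of the form $(\epsilon,R)$. A $\mathbf{gv}$-search from $(X_0,R_0)$ is a finite or infinite sequence of $\mathbf{gv}$-positions $(X_0,R_0),(X_1,R_1),\dots$ with each $(X_{i+1},R_{i+1})$ a $\mathbf{gv}$-successor of $(X_i,R_i)$; it is complete if it is infinite or $R_n=\emptyset$ for some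 $n$, and a complete search is winning for the searchers if $R_n=\emptyset$ for some $n$. A complete search from $(\epsilon,G)$ is monotone if $R_{i+1}\subseteq R_i$ for all $i$; searcher-stationary if $X_i\preceq X_{i+1}$ for all $i$ with $R_i\neq\emptyset$; uses at most $k$ searchers if $|X_i|\le k$ for all $i$. A (searcher) $\mathbf{gv}$-strategy is a function $\sigma$ from $\mathbf{gv}$-positions to $V(G)^*$ such that $\sigma(X,R)$ is the first component of some $\mathbf{gv}$-successor of $(X,R)$; a search is consistent with $\sigma$ if $X_{i+1}=\sigma(X_i,R_i)$ for all $i$. $\sigma$ is winning if every complete consistent search from $(\epsilon,G)$ is winning for the searchers; it is monotone / searcher-stationary / uses at most $k$ searchers if every complete consistent search from $(\epsilon,G)$ has that property. $\mathrm{lifo}_{\mathbf{gv}}(G)$ (resp. $\mathrm{lifo}_{\mathtt{m}\mathbf{gv}}(G)$) is the minimum $k$ such that there is a winning (resp. monotone winning) $\mathbf{gv}$-strategy using at most $k$ searchers; $\mathrm{sstat}_{\mathtt{vsc}}(G)$ is the minimum $k$ such that there is a searcher-stationary winning $\mathtt{vsc}$-strategy using at most $k$ searchers. *)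

From mathcomp Require Import all_boot.
Set Implicit Arguments. Unset Strict Implicit. Unset Printing Implicit Defensive.

(* A digraph is a finite type T of vertices with an edge relation e : rel T
   (simple, no self-loops: irreflexive e; at least one vertex: 0 < #|T|).
   Induced subgraphs are identified with vertex sets {set T}. *)

Section Digraph.
Variables (T : finType) (e : rel T).

Definition relS (S : {set T}) : rel T := fun x y => [&& e x y, x \in S & y \in S].
Definition reachS (S : {set T}) (u v : T) : bool := (u \in S) && connect (relS S) u v.
Definition sconn (S : {set T}) (u v : T) : bool := reachS S u v && reachS S v u.
(* the strongly connected component of u in S (empty if u \notin S) *)
Definition scc (S : {set T}) (u : T) : {set T} := [set v | sconn S u v].

Definition acyclicS (S : {set T}) : bool :=
  [forall x, forall y, ~~ (relS S x y && connect (relS S) y x)].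
Definition strongly_connected (S : {set T}) : bool :=
  (S != set0) && [forall x in S, forall y in S, connect (relS S) x y].

(* cycle rank, computed by recursion with fuel n >= #|S| *)
Fixpoint crf (n : nat) (S : {set T}) : nat :=
  match n with
  | 0 => 0
  | n'.+1 =>
    if acyclicS S then 0
    else if strongly_connected S then
      (if [pick v in S] is Some v0
       then \big[minn/crf n' (S :\ v0)]_(v in S) crf n' (S :\ v)
       else 0).+1
    else \max_(u in S) crf n' (scc S u)
  end.

Definition cycle_rank : nat := crf #|T| [set: T].

Definition letters (X : seq T) : {set T} := [set x in X].
Definition avail (X : seq T) : {set T} := ~: letters X.

Inductive gvar := Gi | Gisc | Gv | Gvsc.

Definition succ_closed (A R : {set T}) : Prop :=
  forall u v, u \in R -> v \in A -> e u v -> v \in R.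
Definition scc_union (A R : {set T}) : Prop :=
  forall u v, u \in R -> sconn A u v -> v \in R.
Definition initial_component (R C : {set T}) : Prop :=
  (exists2 u, u \in R & C = scc R u) /\
  (forall x y, x \in R -> x \notin C -> y \in C -> ~~ e x y).
Definition unique_initial (R : {set T}) : Prop :=
  exists C, initial_component R C /\ forall C', initial_component R C' -> C' = C.
Definition is_scc (A R : {set T}) : Prop := exists2 u, u \in A & R = scc A u.

Definition position (g : gvar) (X : seq T) (R : {set T}) : Prop :=
  R \subset avail X /\
  match g with
  | Gi => succ_closed (avail X) R
  | Gisc => scc_union (avail X) R
  | Gv => R = set0 \/ (succ_closed (avail X) R /\ unique_initial R)
  | Gvsc => R = set0 \/ is_scc (avail X) R
  end.

Definition symdiff (A B : {set T}) : {set T} := (A :\: B) :|: (B :\: A).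

Definition gsucc (g : gvar) (p p' : seq T * {set T}) : Prop :=
  let: (X, R) := p in let: (X', R') := p' in
  [/\ position g X' R',
      prefix X X' || prefix X' X,
      #|symdiff (letters X) (letters X')| = 1 &
      let S := ~: (letters X :&: letters X') in
      forall v', v' \in R' ->
        exists2 v, v \in R &
          match g with Gi | Gv => reachS S v v' | Gisc | Gvsc => sconn S v v' end].

Definition special (g : gvar) (p : seq T * {set T}) : Prop :=
  (g = Gv \/ g = Gvsc) /\ p = ([::], [set: T]) /\ ~ position g [::] [set: T].

Definition succ (g : gvar) (p p' : seq T * {set T}) : Prop :=
  (special g p -> p'.1 = [::] /\ position g p'.1 p'.2) /\
  (~ special g p -> gsucc g p p').

Definition strategy (g : gvar) (sigma : seq T -> {set T} -> seq T) : Prop :=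
  forall X R, position g X R \/ special g (X, R) ->
    exists R', succ g (X, R) (sigma X R, R').

(* a search is a finite (len = Some n: positions 0..n) or infinite (len = None)
   sequence s of positions *)
Definition in_range (len : option nat) (i : nat) : bool :=
  if len is Some n then i <= n else true.

Definition search (g : gvar) (len : option nat) (s : nat -> seq T * {set T}) : Prop :=
  s 0 = ([::], [set: T]) /\ forall i, in_range len i.+1 -> succ g (s i) (s i.+1).

Definition consistent (sigma : seq T -> {set T} -> seq T) len (s : nat -> seq T * {set T}) :=
  forall i, in_range len i.+1 -> (s i.+1).1 = sigma (s i).1 (s i).2.

Definition complete len (s : nat -> seq T * {set T}) : Prop :=
  len = None \/ exists2 n, in_range len n & (s n).2 = set0.

Definition searchers_win len (s : nat -> seq T * {set T}) : Prop :=
  exists2 n, in_range len n & (s n).2 = set0.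

Definition play g sigma len s : Prop :=
  [/\ search g len s, consistent sigma len s & complete len s].

Definition winning g sigma : Prop :=
  forall len s, play g sigma len s -> searchers_win len s.
Definition monotone g sigma : Prop :=
  forall len s, play g sigma len s ->
    forall i, in_range len i.+1 -> (s i.+1).2 \subset (s i).2.
Definition uses_at_most g sigma (k : nat) : Prop :=
  forall len s, play g sigma len s ->
    forall i, in_range len i -> size (s i).1 <= k.
Definition searcher_stationary g sigma : Prop :=
  forall len s, play g sigma len s ->
    forall i, in_range len i.+1 -> (s i).2 != set0 -> prefix (s i).1 (s i.+1).1.

Definition IsMin (P : nat -> Prop) (m : nat) : Prop := P m /\ forall k, P k -> m <= k.

(* lifo_is g mono m : m = lifo_g(G) (mono = false) or lifo_{m g}(G) (mono = true) *)
Definition lifo_is (g : gvar) (mono : bool) (m : nat) : Prop :=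
  IsMin (fun k => exists sigma, [/\ strategy g sigma, winning g sigma,
                                   (mono = true -> monotone g sigma) &
                                   uses_at_most g sigma k]) m.

Definition sstat_is (m : nat) : Prop :=
  IsMin (fun k => exists sigma, [/\ strategy Gvsc sigma, winning Gvsc sigma,
                                   searcher_stationary Gvsc sigma &
                                   uses_at_most Gvsc sigma k]) m.

End Digraph.

From Pilot Require Import Defs.
From mathcomp Require Import all_boot.
From Stdlib Require Import Classical ClassicalEpsilon.
From mathcomp Require Import zify.
Set Implicit Arguments. Unset Strict Implicit. Unset Printing Implicit Defensive.

(* Lower bound: the robber hides in a strongly connected component of maximal cycle
   rank; when a searcher lands on it, he moves to a component of maximal cycle rank of
   what remains, losing at most one unit of cycle rank.  As long as at most cr(G)
   vertices are occupied his component is nonempty, and lifting searchers never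
   hurts him: after a common prefix of two searcher words, both of his components lie
   in the component he held at that prefix.

   Upper bound: the robber's region need not be strongly connected, so the searchers
   maintain a chain of components, each obtained from the previous one by removing a
   vertex that lowers its cycle rank.  They extend the chain while the robber can
   reach its last set, choosing the component with the fewest ancestors so that no
   edge of the robber's reach enters it, and otherwise lift the last searcher.
   Extending strictly shrinks the robber's reach, lifting never enlarges it, and the
   chain has length at most cr(G)+1.  In the vsc game the robber's region is itself a
   component and the searchers never need to lift anyone. *)

Section Reachability.
Variables (T : finType) (e : rel T).
Implicit Types (S K : {set T}) (P : T -> Prop) (u v w x y : T).

Notation relS := (relS e).
Notation reachS := (reachS e).
Notation sconn := (sconn e).
Notation scc := (scc e).

Lemma connect_invariant S P u v :
  (forall x y, P x -> relS S x y -> P y) -> P u -> connect (relS S) u v -> P v.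
Proof.
move=> HP Pu /connectP[p pth ->]; elim: p u Pu pth => //= y p IH u Pu /andP[r pth].
exact: IH (HP _ _ Pu r) pth.
Qed.

Lemma reachS_ind S P u v :
  (forall x y, P x -> x \in S -> y \in S -> e x y -> P y) -> P u -> reachS S u v -> P v.
Proof.
move=> HP Pu /andP[_]; apply: connect_invariant Pu => x y Px /and3P[exy xS yS].
exact: HP Px xS yS exy.
Qed.

Lemma reachS_in S u v : reachS S u v -> u \in S /\ v \in S.
Proof.
move=> r; have uS : u \in S by case/andP: r.
by split=> //; apply: (reachS_ind (P := fun z => z \in S)) r => // x y.
Qed.

Lemma reachS_refl S u : u \in S -> reachS S u u.
Proof. by move=> uS; rewrite /Defs.reachS uS connect0. Qed.

Lemma reachS_trans S u v w : reachS S u v -> reachS S v w -> reachS S u w.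
Proof. by case/andP=> uS c1 /andP[_ c2]; rewrite /Defs.reachS uS (connect_trans c1 c2). Qed.

Lemma reachS_edge S u v : u \in S -> v \in S -> e u v -> reachS S u v.
Proof. by move=> uS vS euv; rewrite /Defs.reachS uS connect1 // /Defs.relS euv uS vS. Qed.

Lemma reachS_sub S S' u v : S \subset S' -> reachS S u v -> reachS S' u v.
Proof.
move=> sub r; have [uS _] := reachS_in r.
apply: (reachS_ind (P := reachS S' u)) r; last exact: reachS_refl (subsetP sub _ uS).
move=> x y rux xS yS exy; apply: reachS_trans rux (reachS_edge _ _ exy); exact: subsetP sub _ _.
Qed.

Lemma reachS_restrict S S' u v :
  (forall x y, reachS S u x -> x \in S' -> y \in S -> e x y -> y \in S') ->
  u \in S' -> reachS S u v -> reachS S' u v.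
Proof.
move=> H uS' r; have [uS _] := reachS_in r.
suff [] : reachS S u v /\ reachS S' u v by [].
apply: (reachS_ind (P := fun z => reachS S u z /\ reachS S' u z)) r; last first.
  by split; exact: reachS_refl.
move=> x y [r1 r2] xS yS exy; have yS' := H _ _ r1 (reachS_in r2).2 yS exy.
split; first exact: reachS_trans r1 (reachS_edge xS yS exy).
exact: reachS_trans r2 (reachS_edge (reachS_in r2).2 yS' exy).
Qed.

Lemma reachS_exit S K u v : reachS S u v -> u \in K -> v \notin K ->
  exists x y, [/\ x \in K, y \notin K, x \in S, y \in S & e x y].
Proof.
move=> r uK vK; apply: NNPP => nH; move: vK; apply/negP/negPn.
apply: (reachS_ind (P := fun z => z \in K)) r => // x y xK xS yS exy.
by apply: contraT => yK; case: nH; exists x, y.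
Qed.

Lemma sconn_trans S u v w : sconn S u v -> sconn S v w -> sconn S u w.
Proof.
case/andP=> a b /andP[c d]; apply/andP.
by split; [exact: reachS_trans a c | exact: reachS_trans d b].
Qed.

Lemma sconn_refl S u : u \in S -> sconn S u u.
Proof. by move=> uS; rewrite /Defs.sconn reachS_refl. Qed.

Lemma sconn_in S u v : sconn S u v -> u \in S /\ v \in S.
Proof. by case/andP=> /reachS_in. Qed.

Lemma sconn_sub S S' u v : S \subset S' -> sconn S u v -> sconn S' u v.
Proof. by move=> sub /andP[a b]; rewrite /Defs.sconn !(reachS_sub sub). Qed.

Lemma in_scc S u v : (v \in scc S u) = sconn S u v.
Proof. by rewrite inE. Qed.

Lemma scc_self S u : u \in S -> u \in scc S u.
Proof. by move=> uS; rewrite in_scc sconn_refl. Qed.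

Lemma scc_sub S u : scc S u \subset S.
Proof. by apply/subsetP=> v; rewrite in_scc => /sconn_in[]. Qed.

Lemma scc_sconn S u v w : v \in scc S u -> w \in scc S u -> sconn S v w.
Proof.
rewrite !in_scc => /andP[uv vu] /andP[uw wu].
by apply/andP; split; [exact: reachS_trans vu uw | exact: reachS_trans wu uv].
Qed.

Lemma scc_eq S u v : v \in scc S u -> scc S v = scc S u.
Proof.
move=> vC; apply/setP=> w; rewrite !in_scc; apply/idP/idP => h.
  by apply: sconn_trans h; move: vC; rewrite in_scc.
by apply: scc_sconn vC _; rewrite in_scc.
Qed.

Lemma scc_path S u v w : v \in scc S u -> w \in scc S u -> reachS (scc S u) v w.
Proof.
move=> vC wC; have /andP[/andP[vS c] _] := scc_sconn vC wC.
rewrite /Defs.reachS vC /=; move: c => /connectP[p pth wl]; subst w.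
elim: p v vC vS pth wC => [|z p IH] v vC vS /=; first by rewrite connect0.
case/andP=> r pth lC; have [_ zS] := reachS_in (introT andP (conj vS (connect1 r))).
have rz : reachS S v z by rewrite /Defs.reachS vS connect1.
have zl : reachS S z (last z p) by rewrite /Defs.reachS zS; apply/connectP; exists p.
have zC : z \in scc S u.
  rewrite -(scc_eq vC) in_scc; apply/andP; split=> //.
  by have /andP[_ b] := scc_sconn vC lC; exact: reachS_trans zl b.
apply: connect_trans (IH z zC zS pth lC); apply: connect1.
by move: r => /and3P[ezv _ _]; rewrite /Defs.relS ezv vC zC.
Qed.

Lemma scc_sc S u : u \in S -> strongly_connected e (scc S u).
Proof.
move=> uS; apply/andP; split; first by apply/set0Pn; exists u; exact: scc_self.
apply/forallP=> x; apply/implyP=> xC; apply/forallP=> y; apply/implyP=> yC.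
by have /andP[] := scc_path xC yC.
Qed.

End Reachability.

Lemma bigmin_le (I : eqType) (r : seq I) (P : pred I) (F : I -> nat) x0 w :
  w \in r -> P w -> \big[minn/x0]_(i <- r | P i) F i <= F w.
Proof.
elim: r => //= a r IH; rewrite inE big_cons => /orP[/eqP->|wr] Pw.
  by rewrite Pw geq_minl.
by case: (P a); [exact: leq_trans (geq_minr _ _) (IH wr Pw) | exact: IH].
Qed.

Lemma bigmin_attained (I : eqType) (r : seq I) (P : pred I) (F : I -> nat) x0 :
  let b := \big[minn/x0]_(i <- r | P i) F i in b = x0 \/ exists2 i, P i & b = F i.
Proof.
apply: (big_ind (fun b => b = x0 \/ exists2 i, P i & b = F i)) => [|x y hx hy|i Pi].
- by left.
- by rewrite /minn; case: ltnP.
- by right; exists i.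
Qed.

Section CycleRank.
Variables (T : finType) (e : rel T).
Hypothesis e_irr : irreflexive e.
Implicit Types (S K : {set T}) (u v w x y : T).
Notation crf := (crf e).
Notation scc := (scc e).

(* Any fuel n >= #|S| gives the same value, by [crf_fuel]. *)
Definition cr S := crf #|S| S.

Lemma acyclic0 : acyclicS e set0.
Proof. by apply/forallP=> x; apply/forallP=> y; rewrite /Defs.relS !inE !andbF. Qed.

Lemma acyclic_sub S S' : S \subset S' -> acyclicS e S' -> acyclicS e S.
Proof.
move=> sub /forallP a; apply/forallP=> x; apply/forallP=> y; apply/negP=> /andP[r c].
have relSS' : subrel (relS e S) (relS e S').
  by move=> a1 b1 /and3P[eab aS bS]; rewrite /Defs.relS eab !(subsetP sub).
move: (a x) => /forallP /(_ y); rewrite relSS' //=.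
by rewrite (connect_sub (fun a1 b1 h => connect1 (relSS' a1 b1 h)) c).
Qed.

Lemma acyclicPn_nonempty S : ~~ acyclicS e S -> S != set0.
Proof. by apply: contra => /eqP->; exact: acyclic0. Qed.

Lemma setD1_nonacyclic S v : ~~ acyclicS e S -> S :\ v != set0.
Proof.
case/forallPn=> x /forallPn[y]; rewrite negbK => /andP[/and3P[exy xS yS] _].
apply/set0Pn; case: (eqVneq x v) => [xv|xv]; last by exists x; rewrite !inE xv xS.
exists y; rewrite !inE yS andbT; apply: contraTneq exy => ->.
by rewrite -xv e_irr.
Qed.

Lemma sc_scc_eq S u : strongly_connected e S -> u \in S -> scc S u = S.
Proof.
move=> /andP[_ /forallP sc] uS; apply/setP=> v; rewrite in_scc; apply/idP/idP.
  by case/sconn_in.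
move=> vS; rewrite /Defs.sconn /Defs.reachS uS vS /=.
move: (sc u); rewrite uS => /forallP /(_ v); rewrite vS /= => ->.
by move: (sc v); rewrite vS => /forallP /(_ u); rewrite uS.
Qed.

Lemma sc_acyclic_single S x y :
  strongly_connected e S -> acyclicS e S -> x \in S -> y \in S -> x = y.
Proof.
move=> sc a xS yS; apply: contraTeq a => nxy; apply/forallPn; exists x.
have /andP[_ /connectP[[|z p] /= pth yl]] : reachS e S x y.
  by rewrite -(sc_scc_eq sc xS) scc_path // sc_scc_eq.
  by rewrite yl eqxx in nxy.
case/andP: pth => r _; apply/forallPn; exists z; rewrite negbK r /=.
have zS : z \in S by case/and3P: r.
by have /andP[] : reachS e S z x by rewrite -(sc_scc_eq sc zS) scc_path // sc_scc_eq.
Qed.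

Lemma scc_proper S u : u \in S -> ~~ strongly_connected e S -> #|scc S u| < #|S|.
Proof.
move=> uS nsc; apply: proper_card; rewrite properEneq scc_sub andbT.
by apply: contra nsc => /eqP <-; apply: scc_sc.
Qed.

Lemma card_setD1_lt S v : v \in S -> #|S :\ v| < #|S|.
Proof. by move=> vS; rewrite (cardsD1 v S) vS. Qed.

Lemma crf_fuel n m S : #|S| <= n -> #|S| <= m -> crf n S = crf m S.
Proof.
elim: n m S => [|n IH] [|m] S //=.
- by rewrite leqn0 cards_eq0 => /eqP-> _; rewrite acyclic0.
- by move=> _; rewrite leqn0 cards_eq0 => /eqP->; rewrite acyclic0.
move=> hn hm; case: (acyclicS e S) => //; case: ifP => sc.
  case: pickP => [v0 v0S|_] //; congr _.+1.
  have h v : v \in S -> crf n (S :\ v) = crf m (S :\ v).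
    by move=> /card_setD1_lt lt; apply: IH; lia.
  by rewrite (h _ v0S); apply: eq_bigr => v /h.
by apply: eq_bigr => u uS; have := scc_proper uS (negbT sc) => lt; apply: IH; lia.
Qed.

Lemma cr_unfold S : cr S =
  if acyclicS e S then 0
  else if strongly_connected e S then
    (if [pick v in S] is Some v0
     then \big[minn/cr (S :\ v0)]_(v in S) cr (S :\ v) else 0).+1
  else \max_(u in S) cr (scc S u).
Proof.
rewrite /cr; case E: #|S| => [|k].
  by move/eqP: E; rewrite cards_eq0 => /eqP->; rewrite acyclic0.
rewrite /=; case: (acyclicS e S) => //; case: ifP => sc.
  case: pickP => [v0 v0S|_] //; congr _.+1.
  have h v : v \in S -> crf k (S :\ v) = cr (S :\ v).
    by move=> /card_setD1_lt lt; apply: crf_fuel; lia.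
  by rewrite (h _ v0S); apply: eq_bigr => v /h.
by apply: eq_bigr => u uS; have := scc_proper uS (negbT sc) => lt; apply: crf_fuel; lia.
Qed.

Lemma cr_acyclic S : acyclicS e S -> cr S = 0.
Proof. by move=> a; rewrite cr_unfold a. Qed.

Lemma cr_gt0_cyclic S : 0 < cr S -> ~~ acyclicS e S.
Proof. by apply: contraL => /cr_acyclic->. Qed.

Lemma cr_sc_le S v : strongly_connected e S -> ~~ acyclicS e S -> v \in S ->
  cr S <= (cr (S :\ v)).+1.
Proof.
move=> sc na vS; rewrite cr_unfold (negbTE na) sc.
case: pickP => [v0 _|/(_ v)]; last by rewrite vS.
by rewrite ltnS; apply: bigmin_le => //; rewrite mem_index_enum.
Qed.

Lemma cr_sc_attained S : strongly_connected e S -> ~~ acyclicS e S ->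
  exists2 v, v \in S & cr S = (cr (S :\ v)).+1.
Proof.
move=> sc na; rewrite cr_unfold (negbTE na) sc; case: pickP => [v0 v0S|H].
  case: (bigmin_attained (index_enum T) (mem S) (fun v => cr (S :\ v)) (cr (S :\ v0))).
    by move=> ->; exists v0.
  by case=> v vS ->; exists v.
by case/andP: sc => /set0Pn[x xS] _; move: (H x); rewrite xS.
Qed.

Lemma cr_scc_le S u : u \in S -> cr (scc S u) <= cr S.
Proof.
move=> uS; case a: (acyclicS e S).
  by rewrite cr_acyclic //; apply: acyclic_sub a; exact: scc_sub.
case sc: (strongly_connected e S); first by rewrite sc_scc_eq.
rewrite [cr S]cr_unfold a sc.
exact: (@leq_bigmax_cond _ (mem S) (fun u => cr (scc S u)) u uS).
Qed.

Lemma cr_scc_attained S : S != set0 -> exists2 u, u \in S & cr S <= cr (scc S u).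
Proof.
case/set0Pn=> u0 u0S; case a: (acyclicS e S); first by exists u0; rewrite // cr_acyclic.
case sc: (strongly_connected e S); first by exists u0; rewrite // sc_scc_eq.
rewrite [cr S]cr_unfold a sc.
have S_gt0 : 0 < #|S| by rewrite card_gt0; apply/set0Pn; exists u0.
by have [u uS ->] := eq_bigmax_cond (fun u => cr (scc S u)) S_gt0; exists u.
Qed.

End CycleRank.

Section Words.
Variable T : finType.
Implicit Types (X Y : seq T) (x z : T) (A B : {set T}).

Definition legal_move X X' : bool :=
  (prefix X X' || prefix X' X) && (#|symdiff (letters X) (letters X')| == 1).

Lemma letters_rcons X x : letters (rcons X x) = x |: letters X.
Proof. by apply/setP=> y; rewrite !inE mem_rcons inE. Qed.

Lemma avail_rcons X x : avail (rcons X x) = avail X :\ x.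
Proof. by apply/setP=> y; rewrite !inE mem_rcons inE negb_or andbC. Qed.

Lemma avail_nil : avail ([::] : seq T) = setT.
Proof. by apply/setP=> y; rewrite !inE. Qed.

Lemma card_letters_rcons X x :
  #|letters (rcons X x)| = #|letters X| + (x \notin letters X).
Proof.
rewrite letters_rcons; case: (boolP (x \in letters X)) => h /=.
  by rewrite (setUidPr _) ?addn0 // sub1set.
by rewrite cardsU1 h add1n addn1.
Qed.

Lemma card_letters X : #|letters X| <= size X.
Proof. by rewrite cardsE card_size. Qed.

Lemma letters_prefix X Y : prefix X Y -> letters X \subset letters Y.
Proof. by case/prefixP=> Z ->; apply/subsetP=> y; rewrite !inE mem_cat => ->. Qed.

Lemma setC_letters_prefix X Y : prefix X Y -> ~: (letters X :&: letters Y) = avail X.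
Proof. by move=> p; rewrite (setIidPl (letters_prefix p)). Qed.

Lemma symdiffC A B : symdiff A B = symdiff B A.
Proof. by rewrite /symdiff setUC. Qed.

Lemma card_symdiff_setU1 z B : z \notin B -> #|symdiff (z |: B) B| = 1.
Proof.
move=> zB; rewrite /symdiff (_ : B :\: _ = set0) ?setU0; last first.
  by apply/setP=> x; rewrite !inE; case: (x \in B); rewrite ?orbT ?andbF.
rewrite (_ : _ :\: _ = [set z]) ?cards1 //; apply/setP=> x; rewrite !inE.
by case: eqP => [->|]; rewrite ?zB ?andNb.
Qed.

Lemma legal_push X x : x \notin letters X -> legal_move X (rcons X x).
Proof.
move=> xn; rewrite /legal_move prefix_rcons letters_rcons symdiffC.
by rewrite card_symdiff_setU1.
Qed.

(* On the reversed word: drop the letters that occur again later, then the first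
   one that does not; reversing back removes the last new letter of the word. *)
Fixpoint pop_rev (Z : seq T) : seq T :=
  if Z is z :: Z' then (if z \in Z' then pop_rev Z' else Z') else [::].

Lemma pop_revP Z : Z != [::] -> exists z W,
  [/\ Z = W ++ pop_rev Z, z \notin pop_rev Z,
      (forall x, (x \in Z) = (x == z) || (x \in pop_rev Z)) & size (pop_rev Z) < size Z].
Proof.
elim: Z => //= a Z IH _; case: ifP => aZ; last by exists a, [:: a]; rewrite aZ.
have [|z [W [EZ zn mem sz]]] := IH; first by case: Z aZ {IH}.
exists z, (a :: W); split => //; first by rewrite /= -EZ.
  by move=> x; rewrite inE -mem; case: eqP => // ->.
exact: ltnW.
Qed.

Definition pop_letter X := rev (pop_rev (rev X)).

Lemma pop_letterP X : X != [::] -> exists z,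
  [/\ prefix (pop_letter X) X, z \notin letters (pop_letter X),
      letters X = z |: letters (pop_letter X) & size (pop_letter X) < size X].
Proof.
move=> nX; have nZ : rev X != [::] by rewrite -size_eq0 size_rev size_eq0.
have [z [W [EZ zn mem sz]]] := pop_revP nZ.
exists z; split.
- by apply/prefixP; exists (rev W); rewrite /pop_letter -rev_cat -EZ revK.
- by rewrite inE mem_rev.
- by apply/setP=> x; rewrite !inE /pop_letter mem_rev -mem mem_rev.
- by move: sz; rewrite /pop_letter !size_rev.
Qed.

Lemma legal_pop X : X != [::] -> legal_move X (pop_letter X).
Proof. by case/pop_letterP=> z [p zn L _]; rewrite /legal_move p orbT L card_symdiff_setU1. Qed.

Lemma pop_letter_rcons X x : x \notin letters X -> pop_letter (rcons X x) = X.
Proof. by rewrite inE => xn; rewrite /pop_letter rev_rcons /= mem_rev (negbTE xn) revK. Qed.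

Variable x0 : T.

Definition default_move X := if X is [::] then [:: x0] else pop_letter X.

Lemma legal_default_move X : legal_move X (default_move X).
Proof.
case: X => [|a X] /=; last exact: legal_pop.
by rewrite -[[:: x0]]/(rcons [::] x0) legal_push // inE.
Qed.

Lemma size_default_move X : size (default_move X) <= maxn 1 (size X).
Proof.
case: X => [|a X] //=; have [z [_ _ _ sz]] := @pop_letterP (a :: X) isT.
by move: sz => /= sz; lia.
Qed.

End Words.

Section Moves.
Variables (T : finType) (e : rel T).
Implicit Types (X : seq T) (R S : {set T}) (p : seq T * {set T}) (u v : T).

Lemma position_set0 g X : position e g X set0.
Proof.
split; first exact: sub0set.
by case: g => //; try (by move=> u v; rewrite inE); left.
Qed.

Lemma position_start g : position e g [::] setT \/ special e g ([::], setT).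
Proof.
have sub : [set: T] \subset avail ([::] : seq T) by rewrite avail_nil.
case: g; try by left; split=> // u v; rewrite in_setT.
- case: (classic (position e Gv [::] setT)) => [|np]; [by left | right].
  by split; [left | split].
- case: (classic (position e Gvsc [::] setT)) => [|np]; [by left | right].
  by split; [right | split].
Qed.

Lemma special_start g p : special e g p -> p = ([::], setT).
Proof. by case=> _ []. Qed.

Lemma special_not_position g X R : special e g (X, R) -> ~ position e g X R.
Proof. by case=> _ [[-> ->]]. Qed.

Definition search_rel g S u v : bool :=
  match g with Gi | Gv => reachS e S u v | Gisc | Gvsc => sconn e S u v end.

Lemma search_rel_refl g S u : u \in S -> search_rel g S u u.
Proof. by case: g => uS; rewrite /= ?reachS_refl ?sconn_refl. Qed.

Lemma gsuccP g X R X' R' : gsucc e g (X, R) (X', R') <->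
  [/\ position e g X' R', legal_move X X' &
      forall v', v' \in R' ->
        exists2 v, v \in R & search_rel g (~: (letters X :&: letters X')) v v'].
Proof.
rewrite /legal_move; split=> [[pos p /eqP c h]|[pos /andP[p /eqP c] h]].
  split=> //; first by rewrite p c.
  by move=> v' /h[v vR hv]; exists v; case: g {pos h} hv.
by split=> // S v' /h[v vR hv]; exists v; case: g {pos h} hv.
Qed.

Lemma gsucc_legal g X R X' R' : gsucc e g (X, R) (X', R') -> legal_move X X'.
Proof. by case/gsuccP. Qed.

Lemma gsucc_set0 g X R X' : legal_move X X' -> gsucc e g (X, R) (X', set0).
Proof. by move=> v; apply/gsuccP; split=> // [|v']; [exact: position_set0 | rewrite in_set0]. Qed.

Lemma gsucc_from_set0 g X X' R' : gsucc e g (X, set0) (X', R') -> R' = set0.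
Proof.
case/gsuccP=> _ _ h; apply/setP=> v; rewrite in_set0; apply/negP=> vR.
by have [w] := h v vR; rewrite in_set0.
Qed.

Lemma succ_position g p p' : succ e g p p' -> position e g p'.1 p'.2.
Proof.
case: p p' => X R [X' R'] [h1 h2]; case: (classic (special e g (X, R))) => [/h1[]//|/h2].
by case.
Qed.

Lemma succ_gsucc g X R X' R' :
  ~ special e g (X, R) -> succ e g (X, R) (X', R') -> gsucc e g (X, R) (X', R').
Proof. by move=> ns [_ h]; exact: h. Qed.

Variable x0 : T.

(* A strategy must answer every position with a legal move: fall back to
   [default_move] wherever the rule does not apply. *)
Definition completed g (rule : seq T -> {set T} -> seq T) X R : seq T :=
  if excluded_middle_informative (special e g (X, R)) then [::]
  else if R == set0 then default_move x0 X
  else if legal_move X (rule X R) then rule X R else default_move x0 X.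

Section Completed.
Variables (g : gvar) (rule : seq T -> {set T} -> seq T).

Lemma completed_special X R : special e g (X, R) -> completed g rule X R = [::].
Proof. by rewrite /completed => sp; case: excluded_middle_informative. Qed.

Lemma completed_set0 X : ~ special e g (X, set0) -> completed g rule X set0 = default_move x0 X.
Proof. by rewrite /completed => ns; case: excluded_middle_informative; rewrite ?eqxx. Qed.

Lemma completed_rule X R : ~ special e g (X, R) -> R != set0 -> legal_move X (rule X R) ->
  completed g rule X R = rule X R.
Proof.
by rewrite /completed => ns nR v; case: excluded_middle_informative; rewrite // (negbTE nR) v.
Qed.

Lemma completed_legal X R : ~ special e g (X, R) -> legal_move X (completed g rule X R).
Proof.
rewrite /completed => ns; destruct excluded_middle_informative as [sp|nsp]; first by case: ns.
by case: (R == set0); last case: ifP; rewrite // legal_default_move.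
Qed.

Lemma completed_strategy : strategy e g (completed g rule).
Proof.
move=> X R _; exists set0; split.
  by move=> sp; rewrite completed_special //; split=> //; exact: position_set0.
by move=> ns; apply: gsucc_set0; exact: completed_legal.
Qed.

End Completed.
End Moves.

Lemma in_range_pred len i : in_range len i.+1 -> in_range len i.
Proof. by case: len => //= n; apply: ltnW. Qed.

Lemma search_position (T : finType) (e : rel T) g len s : search e g len s ->
  forall i, in_range len i -> position e g (s i).1 (s i).2 \/ special e g (s i).
Proof.
case=> s0 hs [|i] hi; first by rewrite s0; exact: position_start.
by left; apply: succ_position (hs i hi).
Qed.

Section MeasureArgument.
Variables (T : finType) (e : rel T) (g : gvar) (sigma : seq T -> {set T} -> seq T).
Variables (Inv : seq T -> {set T} -> Prop) (measure : seq T -> {set T} -> nat) (c : nat).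
Hypothesis Inv_start : Inv [::] setT.
Hypothesis Inv_size : forall X R, Inv X R -> size X <= c.
Hypothesis sigma_step : forall X R X' R',
  position e g X R \/ special e g (X, R) -> Inv X R ->
  succ e g (X, R) (X', R') -> X' = sigma X R ->
  [/\ Inv X' R', R' \subset R & (position e g X R -> R != set0 -> measure X' R' < measure X R)].

Section Play.
Variables (len : option nat) (s : nat -> seq T * {set T}).
Hypothesis s_play : play e g sigma len s.

Let s_search : search e g len s. Proof. by case: s_play. Qed.

Lemma play_Inv i : in_range len i -> Inv (s i).1 (s i).2.
Proof.
case: s_play => -[s0 hs] hc _; elim: i => [|i IH] hi; first by rewrite s0.
have P1 := search_position s_search (in_range_pred hi); have sc := hs i hi.
rewrite [s i]surjective_pairing [s i.+1]surjective_pairing in sc P1 *.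
by case: (sigma_step P1 (IH (in_range_pred hi)) sc (hc i hi)).
Qed.

Lemma play_step i : in_range len i.+1 ->
  (s i.+1).2 \subset (s i).2 /\
  (position e g (s i).1 (s i).2 -> (s i).2 != set0 ->
     measure (s i.+1).1 (s i.+1).2 < measure (s i).1 (s i).2).
Proof.
move=> hi; have I1 := play_Inv (in_range_pred hi).
have P1 := search_position s_search (in_range_pred hi).
case: s_play => -[_ hs] hc _; have sc := hs i hi.
rewrite [s i]surjective_pairing [s i.+1]surjective_pairing in sc P1 *.
by have [_ sub dec] := sigma_step P1 I1 sc (hc i hi).
Qed.

Lemma play_win : searchers_win len s.
Proof.
case: s_play => -[_ hs] _ [E|//]; apply: NNPP => nw.
have hr i : in_range len i by rewrite E.
have ne n : (s n).2 != set0 by apply/negP => /eqP h; apply: nw; exists n.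
have dec i : measure (s i.+1).1 (s i.+1).2 + i <= measure (s 1).1 (s 1).2.
  elim: i => [|i IH]; first by rewrite addn0.
  have pos := succ_position (hs i (hr _)).
  have [_ d] := play_step (hr i.+2); have := d pos (ne _); lia.
by have := dec (measure (s 1).1 (s 1).2).+1; lia.
Qed.

End Play.

Lemma measure_argument :
  [/\ winning e g sigma, monotone e g sigma & uses_at_most e g sigma c].
Proof.
split=> [len s pl | len s pl i hi | len s pl i hi].
- exact: play_win.
- by case: (play_step pl hi).
- exact: Inv_size (play_Inv pl hi).
Qed.

End MeasureArgument.

Section RobberArgument.
Variables (T : finType) (e : rel T) (g : gvar) (k : nat) (robber : seq T -> {set T}).
Hypothesis robber_nonempty : forall X, size X <= k -> robber X != set0.
Hypothesis robber_start : special e g ([::], setT) -> position e g [::] (robber [::]).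
Hypothesis robber_gsucc : forall X R X', size X <= k -> size X' <= k ->
  R = robber X \/ (X = [::] /\ R = setT) -> legal_move X X' ->
  gsucc e g (X, R) (X', robber X').
Variable sigma : seq T -> {set T} -> seq T.
Hypothesis sigma_strategy : strategy e g sigma.

(* Once the searchers exceed k, the robber gives up, so that every move remains legal. *)
Definition robber_answer (p : seq T * {set T}) : seq T * {set T} :=
  let X' := sigma p.1 p.2 in
  (X', if [&& size p.1 <= k, size X' <= k &
             (p.2 == robber p.1) || ((p.1 == [::]) && (p.2 == setT))]
       then robber X' else set0).

Definition robber_play n := iter n robber_answer ([::], setT).

Lemma robber_answer_succ p : position e g p.1 p.2 \/ special e g p -> succ e g p (robber_answer p).
Proof.
case: p => X R /= pp; have [R0 [h1 h2]] := sigma_strategy pp; rewrite /robber_answer /=; split.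
  move=> sp; case: (special_start sp) => EX ER; subst X R; have [/= -> _] := h1 sp.
  by rewrite !eqxx orbT /=; split=> //; exact: robber_start sp.
move=> nsp; have v := gsucc_legal (h2 nsp).
case: ifP => [/and3P[s1 s2 /orP[/eqP E|/andP[/eqP E1 /eqP E2]]]|_]; last exact: gsucc_set0.
  by apply: robber_gsucc => //; left.
by apply: robber_gsucc => //; right.
Qed.

Lemma robber_play_play : play e g sigma None robber_play.
Proof.
have pos n : position e g (robber_play n).1 (robber_play n).2 \/ special e g (robber_play n).
  elim: n => [|n IH]; first exact: position_start.
  by left; exact: succ_position (robber_answer_succ IH).
split; [split=> // i _ | by [] | by left].
exact: robber_answer_succ (pos i).
Qed.

Lemma robber_defeats : winning e g sigma -> uses_at_most e g sigma k -> False.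
Proof.
move=> win use; have [n _ E] := win _ _ robber_play_play.
have sz i : size (robber_play i).1 <= k by exact: use robber_play_play i isT.
have inv i : (robber_play i).2 = robber (robber_play i).1 \/ robber_play i = ([::], setT).
  elim: i => [|i IH]; first by right.
  left; rewrite /= /robber_answer sz (sz i.+1) /=.
  by case: IH => ->; rewrite ?eqxx ?orbT.
case: (inv n) => [h|h]; first by move: (robber_nonempty (sz n)); rewrite -h E eqxx.
have T0 : [set: T] = set0 by move: E; rewrite h.
by move: (robber_nonempty (sz 0)); rewrite /= -subset0 -T0 subsetT.
Qed.

End RobberArgument.

Section Closure.
Variables (T : finType) (e : rel T).
Implicit Types (A C R : {set T}) (u v x : T).
Notation reachS := (reachS e).
Notation scc := (scc e).

Definition reach_cl A C : {set T} := [set v | [exists u in C, reachS A u v]].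

Lemma in_reach_cl A C v : (v \in reach_cl A C) = [exists u in C, reachS A u v].
Proof. by rewrite inE. Qed.

Lemma reach_cl_sub A C : reach_cl A C \subset A.
Proof. by apply/subsetP=> v; rewrite in_reach_cl => /existsP[u /andP[_ /reachS_in[]]]. Qed.

Lemma reach_cl_self A C u : C \subset A -> u \in C -> u \in reach_cl A C.
Proof.
move=> sub uC; rewrite in_reach_cl; apply/existsP; exists u.
by rewrite uC reachS_refl // (subsetP sub).
Qed.

Lemma reach_cl_reachS A C u v : u \in reach_cl A C -> reachS A u v -> v \in reach_cl A C.
Proof.
rewrite !in_reach_cl => /existsP[w /andP[wC r1]] r2; apply/existsP; exists w.
by rewrite wC (reachS_trans r1 r2).
Qed.

Lemma reach_cl_succ_closed A C : succ_closed e A (reach_cl A C).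
Proof.
move=> u v uR vA euv; apply: (reach_cl_reachS uR); apply: reachS_edge => //.
exact: subsetP (reach_cl_sub A C) _ uR.
Qed.

Lemma reach_clS A A' C C' : A' \subset A -> C' \subset C -> reach_cl A' C' \subset reach_cl A C.
Proof.
move=> sA sC; apply/subsetP=> v; rewrite !in_reach_cl => /existsP[u /andP[uC ru]].
by apply/existsP; exists u; rewrite (subsetP sC _ uC) (reachS_sub sA ru).
Qed.

(* Every vertex of the closure is reached from the component, so no other component
   can be initial. *)
Lemma reach_cl_scc_unique_initial A u0 : u0 \in A -> unique_initial e (reach_cl A (scc A u0)).
Proof.
move=> u0A; set C := scc A u0; set R := reach_cl A C.
have u0C : u0 \in C by exact: scc_self.
have CR : C \subset R by apply/subsetP=> c; apply: reach_cl_self; exact: scc_sub.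
have reach_from z : z \in R -> reachS R u0 z.
  rewrite in_reach_cl => /existsP[c /andP[cC rcz]].
  apply: reachS_trans (reachS_sub CR (scc_path u0C cC)) _.
  apply: reachS_restrict rcz; last exact: subsetP CR _ cC.
  move=> a b rca aR bA eab; apply: (reach_cl_reachS aR).
  exact: reachS_edge (reachS_in rca).2 bA eab.
have u0R : u0 \in R by exact: subsetP CR _ u0C.
exists (scc R u0); split.
  split=> [|a b aR aC bC]; first by exists u0.
  apply: contra aC => eab; rewrite in_scc /Defs.sconn reach_from //=.
  rewrite in_scc in bC; have /andP[_ rbu0] := bC; have bR := (sconn_in bC).2.
  exact: reachS_trans (reachS_edge aR bR eab) rbu0.
move=> C' [[u' u'R ->] noe].
suff h0 : u0 \in scc R u' by rewrite (scc_eq h0).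
apply: NNPP => nu0.
have := reachS_exit (K := ~: scc R u') (reach_from _ u'R).
rewrite !in_setC negbK => /(_ (introT negP nu0) (scc_self e u'R)) [a [b [aC bC aR bR eab]]].
by move: aC bC; rewrite !in_setC negbK => aC bC; move: (noe a b aR aC bC); rewrite eab.
Qed.

Lemma scc_setD1_notin A u x : u \in A -> x \notin scc A u -> scc (A :\ x) u = scc A u.
Proof.
move=> uA xn; apply/setP=> v; apply/idP/idP; rewrite !in_scc; first exact/sconn_sub/subD1set.
move=> h; have vC : v \in scc A u by rewrite in_scc.
have sub : scc A u \subset A :\ x.
  apply/subsetP=> w wC; rewrite !inE (subsetP (scc_sub _ _ _) _ wC) andbT.
  by apply: contraNneq xn => <-.
by apply/andP; split; apply: (reachS_sub sub); apply: scc_path => //; exact: scc_self.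
Qed.

Lemma scc_scc_setD1 A u0 x u : u \in scc A u0 :\ x ->
  scc (scc A u0 :\ x) u = scc (A :\ x) u.
Proof.
rewrite in_setD1 => /andP[ux uC]; apply/setP=> v; apply/idP/idP; rewrite !in_scc.
  by apply: sconn_sub; apply: setSD; exact: scc_sub.
move=> h; have vC : v \in scc (A :\ x) u by rewrite in_scc.
have sub : scc (A :\ x) u \subset scc A u0 :\ x.
  apply/subsetP=> w; rewrite in_scc => hw; have [_] := sconn_in hw.
  rewrite !inE => /andP[-> _] /=; rewrite in_scc in uC.
  by apply: sconn_trans uC (sconn_sub _ hw); exact: subD1set.
have uAx : u \in A :\ x by rewrite !inE ux (subsetP (scc_sub _ _ _) _ uC).
by apply/andP; split; apply: (reachS_sub sub); apply: scc_path => //; exact: scc_self.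
Qed.

End Closure.

Lemma legal_move_prefix (T : finType) (X X' : seq T) : legal_move X X' ->
  exists P, [/\ P = X \/ P = X', prefix P X, prefix P X' &
                ~: (letters X :&: letters X') = avail P].
Proof.
case/andP=> /orP[p|p] _.
  by exists X; rewrite prefix_refl setC_letters_prefix //; split=> //; left.
by exists X'; rewrite prefix_refl setIC setC_letters_prefix //; split=> //; right.
Qed.

Section Robber.
Variables (T : finType) (e : rel T).
Hypothesis e_irr : irreflexive e.
Variable x0 : T.
Implicit Types (A S C : {set T}) (u v w x : T) (X Y P : seq T) (n : nat).
Notation cr := (cr e).
Notation scc := (scc e).
Local Notation r := (cr [set: T]).

Definition max_scc S : {set T} :=
  if [pick u in S | cr S <= cr (scc S u)] is Some u then scc S u else set0.

Lemma max_scc_spec S : S != set0 ->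
  exists2 u, u \in S & max_scc S = scc S u /\ cr S <= cr (max_scc S).
Proof.
move=> nS; rewrite /max_scc; case: pickP => [u /andP[uS h]|H]; first by exists u.
by have [u uS h] := cr_scc_attained e nS; move: (H u); rewrite uS h.
Qed.

Lemma max_scc_sub S : max_scc S \subset S.
Proof. by rewrite /max_scc; case: pickP => [u _|_]; [exact: scc_sub | exact: sub0set]. Qed.

Definition robber_step C x := if x \in C then max_scc (C :\ x) else C.
Definition robber_comp X := foldl robber_step (max_scc setT) X.

Lemma robber_comp_rcons X x : robber_comp (rcons X x) = robber_step (robber_comp X) x.
Proof. by rewrite /robber_comp foldl_rcons. Qed.

Lemma robber_comp_prefix X Y : prefix X Y -> robber_comp Y \subset robber_comp X.
Proof.
case/prefixP=> Z ->; rewrite /robber_comp foldl_cat.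
elim: Z (foldl _ _ X) => //= y Z IH C; apply: subset_trans (IH _) _.
by rewrite /robber_step; case: ifP => // _; apply: subset_trans (max_scc_sub _) (subD1set _ _).
Qed.

Lemma robber_step_inv A C x n : (exists2 u, u \in A & C = scc A u) -> C != set0 ->
  r <= cr C + n -> n + (x \in C) <= r ->
  [/\ robber_step C x != set0, exists2 u, u \in A :\ x & robber_step C x = scc (A :\ x) u
    & r <= cr (robber_step C x) + n + (x \in C)].
Proof.
move=> [u uA EC] nC hr hx; rewrite /robber_step; case: ifP => xC; last first.
  have xn : x \notin scc A u by rewrite -EC xC.
  split=> //; last by rewrite addn0.
  exists u; last by rewrite scc_setD1_notin.
  by rewrite in_setD1 uA andbT; apply: contraNneq xn => <-; exact: scc_self.
have na : ~~ acyclicS e C by apply: cr_gt0_cyclic; lia.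
have sc : strongly_connected e C by rewrite EC; exact: scc_sc.
have [u' u'C [E c]] := max_scc_spec (setD1_nonacyclic e_irr x na).
have := cr_sc_le sc na xC => cle; split; [|exists u' | lia].
- by rewrite E; apply/set0Pn; exists u'; exact: scc_self.
- move: u'C; rewrite !in_setD1 => /andP[-> h] /=.
  by rewrite EC in h; exact: subsetP (scc_sub _ _ _) _ h.
- by rewrite E EC scc_scc_setD1 // -EC.
Qed.

Lemma robber_comp_inv X : #|letters X| <= r ->
  [/\ robber_comp X != set0, exists2 u, u \in avail X & robber_comp X = scc (avail X) u
    & r <= cr (robber_comp X) + #|letters X|].
Proof.
elim/last_ind: X => [|X x IH].
  have [|u _ [E c]] := max_scc_spec (S := [set: T]); first by apply/set0Pn; exists x0.
  have -> : letters ([::] : seq T) = set0 by apply/setP=> y; rewrite !inE.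
  rewrite /robber_comp /= avail_nil cards0 addn0 E -{3}E.
  by split=> //; [apply/set0Pn; exists u; exact: scc_self | exists u].
rewrite card_letters_rcons robber_comp_rcons avail_rcons => hc.
have [ne CA ci] := IH (leq_trans (leq_addr _ _) hc).
have hx : (x \in robber_comp X) <= (x \notin letters X).
  case: (CA) => u _ ->; case: (boolP (x \in scc _ u)) => // /(subsetP (scc_sub _ _ _)).
  by rewrite inE => ->.
have hx' : #|letters X| + (x \in robber_comp X) <= r by apply: leq_trans hc; rewrite leq_add2l.
have [ne' CA' ci'] := robber_step_inv CA ne ci hx'.
by split=> //; lia.
Qed.

Lemma robber_comp_sub X : #|letters X| <= r -> robber_comp X \subset avail X.
Proof. by case/robber_comp_inv=> _ [u _ ->] _; exact: scc_sub. Qed.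

Definition robber_region g X : {set T} :=
  match g with Gi | Gv => reach_cl e (avail X) (robber_comp X) | Gisc | Gvsc => robber_comp X end.

Lemma robber_region_nonempty g X : #|letters X| <= r -> robber_region g X != set0.
Proof.
move=> h; have [/set0Pn[w wF] _ _] := robber_comp_inv h; apply/set0Pn; exists w.
by case: g => //=; apply: reach_cl_self => //; exact: robber_comp_sub.
Qed.

Lemma robber_region_position g X : #|letters X| <= r -> position e g X (robber_region g X).
Proof.
move=> h; have [ne [u uA EC] _] := robber_comp_inv h; case: g => /=.
- by split; [exact: reach_cl_sub | exact: reach_cl_succ_closed].
- split; first exact: robber_comp_sub.
  by move=> a b; rewrite EC !in_scc; exact: sconn_trans.
- split; first exact: reach_cl_sub.
  by right; split; [exact: reach_cl_succ_closed | rewrite EC; exact: reach_cl_scc_unique_initial].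
- by split; [exact: robber_comp_sub | right; exists u].
Qed.

(* Both robber components after a common prefix P lie in the component reached at P,
   a strongly connected component of the vertices available at P. *)
Lemma robber_region_from g P X X' w v' : prefix P X -> prefix P X' -> #|letters X| <= r ->
  w \in robber_comp X -> v' \in robber_region g X' -> search_rel e g (avail P) w v'.
Proof.
move=> pX pX' hX wX v'X'.
have hP : #|letters P| <= r by apply: leq_trans (subset_leq_card (letters_prefix pX)) hX.
have [_ [uP _ EP] _] := robber_comp_inv hP.
have wP : w \in scc (avail P) uP by rewrite -EP (subsetP (robber_comp_prefix pX)).
have sub' : robber_comp X' \subset scc (avail P) uP by rewrite -EP robber_comp_prefix.
have avX' : avail X' \subset avail P by rewrite setCS letters_prefix.
case: g v'X' => /= v'X'; try exact: scc_sconn wP (subsetP sub' _ v'X').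
all: move: v'X'; rewrite in_reach_cl => /existsP[u /andP[uX' ru]].
all: apply: reachS_trans (reachS_sub avX' ru).
all: by case/andP: (scc_sconn wP (subsetP sub' _ uX')).
Qed.

Lemma robber_comp_region g X : #|letters X| <= r -> robber_comp X \subset robber_region g X.
Proof.
by move=> h; case: g => //=; apply/subsetP=> w; apply: reach_cl_self; exact: robber_comp_sub.
Qed.

Lemma robber_region_gsucc g X R X' : #|letters X| <= r -> #|letters X'| <= r ->
  R = robber_region g X \/ (X = [::] /\ R = setT) -> legal_move X X' ->
  gsucc e g (X, R) (X', robber_region g X').
Proof.
move=> hX hX' hR v; have pos' := robber_region_position g hX'.
apply/gsuccP; split=> //; have [P [_ pX pX' ->]] := legal_move_prefix v => v' v'X'.
case: hR => [->|[_ ->]]; last first.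
  exists v'; rewrite ?in_setT // search_rel_refl //.
  have avX' : avail X' \subset avail P by rewrite setCS letters_prefix.
  exact: subsetP avX' _ (subsetP pos'.1 _ v'X').
have [/set0Pn[w wX] _ _] := robber_comp_inv hX.
exists w; first exact: subsetP (robber_comp_region g hX) _ wX.
exact: robber_region_from pX pX' hX wX v'X'.
Qed.

Lemma searchers_gt_cr g sigma k : strategy e g sigma -> winning e g sigma ->
  uses_at_most e g sigma k -> r < k.
Proof.
move=> str win use; rewrite ltnNge; apply/negP=> kr.
have hl (X : seq T) : size X <= k -> #|letters X| <= r.
  by move=> h; apply: leq_trans (card_letters X) (leq_trans h kr).
apply: (robber_defeats (robber := robber_region g) _ _ _ str win use).
- by move=> X /hl; exact: robber_region_nonempty.
- by move=> _; apply: robber_region_position; exact: hl.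
- by move=> X R X' /hl hX /hl hX'; exact: robber_region_gsucc.
Qed.

End Robber.

Section PositionClosure.
Variables (T : finType) (e : rel T) (g : gvar).
Implicit Types (X : seq T) (R : {set T}) (v : T).

Lemma position_closed X R v v' : position e g X R -> v \in R ->
  search_rel e g (avail X) v v' -> v' \in R.
Proof.
case=> RA; case: g => /= H vR.
- by apply: (reachS_ind (P := fun z => z \in R)) => // a b aR _ bA; exact: H.
- exact: H.
- case: H => [ER|[H _]]; first by rewrite ER in_set0 in vR.
  by apply: (reachS_ind (P := fun z => z \in R)) => // a b aR _ bA; exact: H.
- case: H => [ER|[u uA ER]]; first by rewrite ER in_set0 in vR.
  by move: vR; rewrite ER !in_scc; exact: sconn_trans.
Qed.

Lemma gsucc_push_sub X R x R' : position e g X R ->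
  gsucc e g (X, R) (rcons X x, R') -> R' \subset R.
Proof.
move=> pos /gsuccP[_ _]; rewrite setC_letters_prefix ?prefix_rcons // => h.
by apply/subsetP=> v' /h[v vR]; exact: position_closed.
Qed.

End PositionClosure.

Section CompletedRule.
Variables (T : finType) (e : rel T) (g : gvar) (x0 : T) (rule : seq T -> {set T} -> seq T).
Variables (Inv : seq T -> {set T} -> Prop) (measure : seq T -> {set T} -> nat) (c : nat).
Hypothesis Inv_start : Inv [::] setT.
Hypothesis Inv_size : forall X R, Inv X R -> size X <= c.
Hypothesis Inv_special : forall R, special e g ([::], setT) -> position e g [::] R -> Inv [::] R.
Hypothesis Inv_default : forall X, Inv X set0 -> Inv (default_move x0 X) set0.
Hypothesis rule_step : forall X R, position e g X R -> Inv X R -> R != set0 ->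
  legal_move X (rule X R) /\
  forall R', gsucc e g (X, R) (rule X R, R') ->
    [/\ Inv (rule X R) R', R' \subset R & measure (rule X R) R' < measure X R].

Lemma completed_measure_argument :
  [/\ winning e g (completed e x0 g rule), monotone e g (completed e x0 g rule)
    & uses_at_most e g (completed e x0 g rule) c].
Proof.
apply: (measure_argument (Inv := Inv) (measure := measure)) => // X R X' R' pp I sc EX'.
subst X'.
case: (classic (special e g (X, R))) => [sp|ns].
  have [EX ER] : X = [::] /\ R = setT by case: (special_start sp).
  subst X R; have [_ pos] := sc.1 sp; rewrite /= completed_special // in pos *.
  by split; [exact: Inv_special sp pos | exact: subsetT | move/(special_not_position sp)].
have gs := succ_gsucc ns sc; case: (eqVneq R set0) => [ER|nR].
  subst R; rewrite completed_set0 // in gs *; rewrite (gsucc_from_set0 gs).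
  by split=> //; exact: Inv_default.
case: pp => [pos|//]; have [v st] := rule_step pos I nR.
by rewrite completed_rule // in gs *; have [] := st _ gs.
Qed.

End CompletedRule.

Section VscStrategy.
Variables (T : finType) (e : rel T) (x0 : T).
Implicit Types (K R : {set T}) (X : seq T).
Notation cr := (cr e).
Notation scc := (scc e).
Local Notation r := (cr [set: T]).

Definition cr_pivot K : T :=
  if [pick v in K] is Some v0 then [arg min_(v < v0 in K) cr (K :\ v)] else x0.

Lemma cr_pivot_spec K : K != set0 ->
  cr_pivot K \in K /\ forall v, v \in K -> cr (K :\ cr_pivot K) <= cr (K :\ v).
Proof.
move=> nK; rewrite /cr_pivot; case: pickP => [v0 v0K|H]; first by case: arg_minnP.
by case/set0Pn: nK => x xK; move: (H x); rewrite xK.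
Qed.

Lemma cr_pivotE K : strongly_connected e K -> ~~ acyclicS e K ->
  cr K = (cr (K :\ cr_pivot K)).+1.
Proof.
move=> sc na; have [oK om] := cr_pivot_spec (acyclicPn_nonempty na).
have [v vK Ev] := cr_sc_attained sc na.
by apply/eqP; rewrite eqn_leq (cr_sc_le sc na oK) Ev ltnS om.
Qed.

Definition vsc_rule X R := rcons X (cr_pivot R).

Definition vsc_Inv X R := size X <= r.+1 /\ (R != set0 -> size X + cr R <= r).

Lemma vsc_rule_legal X R : position e Gvsc X R -> R != set0 -> legal_move X (vsc_rule X R).
Proof.
case=> RA _ nR; have [pR _] := cr_pivot_spec nR.
by apply: legal_push; move: (subsetP RA _ pR); rewrite inE.
Qed.

Lemma vsc_rule_step X R : position e Gvsc X R -> vsc_Inv X R -> R != set0 ->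
  legal_move X (vsc_rule X R) /\
  forall R', gsucc e Gvsc (X, R) (vsc_rule X R, R') ->
    [/\ vsc_Inv (vsc_rule X R) R', R' \subset R & #|R'| < #|R|].
Proof.
move=> pos [_ hR] nR; have [RA [ER|[u uA ER]]] := pos; first by rewrite ER eqxx in nR.
have [pR _] := cr_pivot_spec nR; set p := cr_pivot R in pR *.
split=> [|R' gs]; first exact: vsc_rule_legal.
have sub := gsucc_push_sub pos gs; case/gsuccP: (gs) => pos' _ _.
have pR' : p \notin R'.
  by apply/negP=> /(subsetP pos'.1); rewrite avail_rcons !inE eqxx.
have ltR : #|R'| < #|R| by apply: proper_card; rewrite properE sub; apply/subsetPn; exists p.
split=> //; split=> [|nR']; first by rewrite size_rcons ltnS (leq_trans (leq_addr _ _) (hR nR)).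
case: pos'.2 => [E|[u' u'A ER']]; first by rewrite E eqxx in nR'.
have u'R : u' \in R' by rewrite ER'; exact: scc_self.
have u'p : u' \in R :\ p by rewrite in_setD1 (subsetP sub _ u'R) andbT; apply: contraNneq pR' => <-.
have sc : strongly_connected e R by rewrite ER; exact: scc_sc.
have na : ~~ acyclicS e R.
  apply/negP=> a; move: u'p; rewrite in_setD1 (sc_acyclic_single sc a pR (subsetP sub _ u'R)).
  by rewrite eqxx.
have ER'' : R' = scc (R :\ p) u'.
  by rewrite ER' avail_rcons; symmetry; rewrite {1}ER scc_scc_setD1 // -ER.
have := cr_scc_le e u'p; rewrite -ER'' size_rcons => le.
by have := hR nR; rewrite (cr_pivotE sc na) -/p; lia.
Qed.

Definition vsc_sigma := completed e x0 Gvsc vsc_rule.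

Lemma vsc_strategy :
  [/\ strategy e Gvsc vsc_sigma, winning e Gvsc vsc_sigma, monotone e Gvsc vsc_sigma,
      uses_at_most e Gvsc vsc_sigma r.+1 & searcher_stationary e Gvsc vsc_sigma].
Proof.
rewrite /vsc_sigma; have I0 : vsc_Inv [::] setT by split=> // _; rewrite add0n.
have Ispecial R : special e Gvsc ([::], setT) -> position e Gvsc [::] R -> vsc_Inv [::] R.
  move=> _ [_ [->|[u uA ->]]]; split=> //; first by rewrite eqxx.
  by move=> _; rewrite add0n -[in X in _ <= X]avail_nil; exact: cr_scc_le.
have Idefault X : vsc_Inv X set0 -> vsc_Inv (default_move x0 X) set0.
  case=> hX _; split; last by rewrite eqxx.
  by apply: leq_trans (size_default_move x0 X) _; rewrite geq_max hX.
have [w m u] := completed_measure_argument I0 (fun X R (h : vsc_Inv X R) => h.1)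
  Ispecial Idefault vsc_rule_step.
split=> //; first exact: completed_strategy.
move=> len s [sr hc _] i hi; rewrite (hc i hi).
have := search_position sr (in_range_pred hi); case: (s i) => X R /= [pos|sp] nR.
  rewrite completed_rule; [exact: prefix_rcons | by move/special_not_position | by [] |].
  exact: vsc_rule_legal.
by rewrite [X](congr1 fst (special_start sp)) prefix0s.
Qed.

End VscStrategy.

Section RemoveVertex.
Variables (T : finType) (e : rel T).
Implicit Types (S : {set T}) (u v x : T).

Lemma reachS_setD1 S x u v : u \in S :\ x ->
  (forall a, reachS e (S :\ x) u a -> ~~ e a x) -> reachS e S u v -> reachS e (S :\ x) u v.
Proof.
move=> ux noe; apply: (reachS_ind (P := reachS e (S :\ x) u)); last exact: reachS_refl.
move=> a b rua aS bS eab.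
have bSx : b \in S :\ x by rewrite in_setD1 bS andbT; apply: contraNneq (noe a rua) => <-.
exact: reachS_trans rua (reachS_edge (reachS_in rua).2 bSx eab).
Qed.

Lemma search_rel_setD1 g S x u v : u \in S :\ x ->
  (forall a, reachS e (S :\ x) u a -> ~~ e a x) ->
  search_rel e g S u v -> search_rel e g (S :\ x) u v.
Proof.
move=> ux noe; case: g => //=; try exact: reachS_setD1.
all: case/andP=> uv vu; have uv' := reachS_setD1 ux noe uv; rewrite /Defs.sconn uv' /=.
all: apply: reachS_setD1 vu => [|a va]; first exact: (reachS_in uv').2.
all: exact/noe/(reachS_trans uv' va).
Qed.

End RemoveVertex.

Section Chains.
Variables (T : finType) (e : rel T) (x0 : T).
Implicit Types (F Q : {set T}) (a b q x : T) (X P Y : seq T).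
Notation cr := (cr e).
Notation scc := (scc e).
Notation pivot := (cr_pivot e x0).
Local Notation r := (cr [set: T]).

(* [None] marks words that are not chains. *)
Definition chain_step (o : option {set T}) x : option {set T} :=
  if o is Some F then
    (if (x \in F) && (pivot (scc F x) == x) then Some (scc F x :\ x) else None)
  else None.

Definition chain X := foldl chain_step (Some setT) X.

Lemma chain_rcons X x F : chain X = Some F -> x \in F -> pivot (scc F x) = x ->
  chain (rcons X x) = Some (scc F x :\ x).
Proof. by rewrite /chain foldl_rcons => -> /= -> ->; rewrite eqxx. Qed.

Lemma chain_rcons_inv X x F : chain (rcons X x) = Some F -> exists Fp,
  [/\ chain X = Some Fp, x \in Fp, pivot (scc Fp x) = x & F = scc Fp x :\ x].
Proof.
rewrite /chain foldl_rcons -/(chain X); case: (chain X) => [Fp|] //=.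
by case: ifP => // /andP[xF /eqP o] [<-]; exists Fp.
Qed.

Lemma chain_sub X F : chain X = Some F -> F \subset avail X.
Proof.
elim/last_ind: X F => [|X x IH] F; first by move=> [<-]; rewrite avail_nil.
case/chain_rcons_inv=> Fp [cF xF _ ->]; rewrite avail_rcons.
by apply: setSD; apply: subset_trans (IH _ cF); exact: scc_sub.
Qed.

Lemma chain_size X F : chain X = Some F ->
  size X <= r.+1 /\ (F != set0 -> size X + cr F <= r).
Proof.
elim/last_ind: X F => [|X x IH] F; first by move=> [<-].
case/chain_rcons_inv=> Fp [cF xF o ->]; have [s1 s2] := IH _ cF.
have nFp : Fp != set0 by apply/set0Pn; exists x.
have := s2 nFp; have := cr_scc_le e xF; rewrite size_rcons => c1 h; split=> [|nF]; first lia.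
have xK := scc_self e xF; have sc := scc_sc e xF.
have na : ~~ acyclicS e (scc Fp x).
  case/set0Pn: nF => y; rewrite in_setD1 => /andP[yx yK]; apply/negP => a.
  by move: yx; rewrite (sc_acyclic_single sc a yK xK) eqxx.
by have := cr_pivotE x0 sc na; rewrite o; lia.
Qed.

Definition no_entry X Q : Prop := forall P x Y Fp, X = P ++ x :: Y -> chain P = Some Fp ->
  forall a b, a \in Q -> a \notin scc Fp x -> b \in scc Fp x -> ~~ e a b.

Lemma no_entryS X Q Q' : Q' \subset Q -> no_entry X Q -> no_entry X Q'.
Proof. by move=> s h P x Y Fp E c a b aQ; apply: h E c a b (subsetP s _ aQ). Qed.

Lemma no_entry_nil Q : no_entry [::] Q.
Proof. by move=> [|? ?] ? ?. Qed.

Lemma no_entry_rcons_inv X x Q : no_entry (rcons X x) Q -> no_entry X Q.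
Proof. by move=> h P y Y Fp E; apply: h; rewrite E -cats1 -catA. Qed.

Lemma rcons_eq_cat_cons X z P x Y : rcons X z = P ++ x :: Y ->
  (P = X /\ x = z) \/ (exists Y', X = P ++ x :: Y').
Proof.
case/lastP: Y => [|Y' y]; first by rewrite cats1 => /rcons_inj [-> ->]; left.
by rewrite -rcons_cons -rcons_cat => /rcons_inj [-> _]; right; exists Y'.
Qed.

Lemma no_entry_edge_in X F Q a b : chain X = Some F -> no_entry X Q ->
  Q \subset avail X -> a \in Q -> b \in F -> e a b -> a \in F.
Proof.
case/lastP: X => [|X xj]; first by move=> [<-]; rewrite in_setT.
move=> cF ni QA aQ bF eab; have [Fp [cFp xF _ EF]] := chain_rcons_inv cF.
move: bF; rewrite EF in_setD1 => /andP[_ bK].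
have aK : a \in scc Fp xj.
  apply: contraT => aK; have := ni X xj [::] Fp (esym (cats1 _ _)) cFp a b aQ aK bK.
  by rewrite eab.
rewrite in_setD1 aK andbT; apply: contraTneq (subsetP QA _ aQ) => ->.
by rewrite avail_rcons !inE eqxx.
Qed.

Definition ancestors F q := [set a | reachS e F a q].

Definition least_ancestral F Q : T :=
  if [pick q in Q :&: F] is Some q0 then [arg min_(q < q0 in Q :&: F) #|ancestors F q|] else x0.

Lemma least_ancestral_spec F Q : Q :&: F != set0 -> least_ancestral F Q \in Q :&: F /\
  forall q, q \in Q :&: F -> #|ancestors F (least_ancestral F Q)| <= #|ancestors F q|.
Proof.
move=> n; rewrite /least_ancestral; case: pickP => [q0 q0Q|H]; first by case: arg_minnP.
by case/set0Pn: n => x xQ; move: (H x); rewrite xQ.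
Qed.

(* An edge from a into the component of q would leave a with fewer ancestors than q. *)
Lemma least_ancestral_no_entry F Q a b : Q :&: F != set0 -> a \in Q :&: F ->
  a \notin scc F (least_ancestral F Q) -> b \in scc F (least_ancestral F Q) -> ~~ e a b.
Proof.
move=> QF aQF aK bK; have [qQF qmin] := least_ancestral_spec QF.
set q := least_ancestral F Q in qQF qmin aK bK.
have [aF qF] : a \in F /\ q \in F by move: aQF qQF; rewrite !inE => /andP[_ ->] /andP[_ ->].
apply/negP=> eab; have := qmin a aQF; apply/negP; rewrite -ltnNge.
have rbq : reachS e F b q by have /andP[] := scc_sconn bK (scc_self e qF).
have raq : reachS e F a q := reachS_trans (reachS_edge aF (subsetP (scc_sub _ _ _) _ bK) eab) rbq.
apply: proper_card; rewrite properE; apply/andP; split.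
  by apply/subsetP=> z; rewrite !inE => rza; exact: reachS_trans rza raq.
apply/subsetPn; exists q; first by rewrite inE reachS_refl.
rewrite inE; apply: contra aK => rqa.
by rewrite in_scc /Defs.sconn rqa.
Qed.

End Chains.

Section ChainStrategy.
Variables (T : finType) (e : rel T) (x0 : T) (g : gvar).
Implicit Types (F Q R : {set T}) (a b x : T) (X P : seq T).
Notation scc := (scc e).
Notation pivot := (cr_pivot e x0).
Local Notation r := (cr e [set: T]).

Definition chain_rule X R : seq T :=
  if chain e x0 X is Some F then
    (if reach_cl e (avail X) R :&: F != set0
     then rcons X (pivot (scc F (least_ancestral e x0 F (reach_cl e (avail X) R))))
     else pop_letter X)
  else X.

Definition chain_Inv X R := size X <= r.+1 /\
  (R != set0 -> exists F, chain e x0 X = Some F /\ no_entry e x0 X (reach_cl e (avail X) R)).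

Definition chain_measure X R := #|reach_cl e (avail X) R| * r.+2 + size X.

Section Push.
Variables (X : seq T) (R F : {set T}).
Hypothesis pos : position e g X R.
Hypothesis cF : chain e x0 X = Some F.
Let Q := reach_cl e (avail X) R.
Hypothesis ni : no_entry e x0 X Q.
Hypothesis QF : Q :&: F != set0.
Let q := least_ancestral e x0 F Q.
Let x := pivot (scc F q).

Let qF : q \in F.
Proof. by have [] := least_ancestral_spec e x0 QF; rewrite inE => /andP[]. Qed.

Let xD : x \in scc F q.
Proof.
have [] // := cr_pivot_spec e x0 (K := scc F q).
by apply/set0Pn; exists q; exact: scc_self.
Qed.

Let xF : x \in F. Proof. exact: subsetP (scc_sub _ _ _) _ xD. Qed.

Lemma chain_push_legal : legal_move X (rcons X x).
Proof. by apply: legal_push; move: (subsetP (chain_sub cF) _ xF); rewrite inE. Qed.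

Lemma chain_push_chain : chain e x0 (rcons X x) = Some (scc F q :\ x).
Proof. by rewrite (chain_rcons cF xF) (scc_eq xD). Qed.

Lemma chain_push_step R' : gsucc e g (X, R) (rcons X x, R') ->
  [/\ chain_Inv (rcons X x) R', R' \subset R & chain_measure (rcons X x) R' < chain_measure X R].
Proof.
move=> gs; have sub := gsucc_push_sub pos gs.
set Q' := reach_cl e (avail (rcons X x)) R'.
have QA : Q \subset avail X by exact: reach_cl_sub.
have Q'Q : Q' \subset Q by apply: reach_clS => //; rewrite avail_rcons subD1set.
have xQ : x \in Q.
  have [qQF _] := least_ancestral_spec e x0 QF; move: qQF; rewrite inE => /andP[qQ _].
  apply: (reach_cl_reachS qQ); apply: reachS_sub (chain_sub cF) _.
  by have /andP[] := scc_sconn (scc_self e qF) xD.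
have xQ' : x \notin Q'.
  by apply/negP=> /(subsetP (reach_cl_sub _ _ _)); rewrite avail_rcons !inE eqxx.
split=> //; last first.
  have lt : #|Q'| < #|Q| by apply: proper_card; rewrite properE Q'Q; apply/subsetPn; exists x.
  rewrite /chain_measure -/Q -/Q' size_rcons; have := leq_mul lt (leqnn r.+2).
  by rewrite mulSn; lia.
split; first by have [] := chain_size chain_push_chain.
move=> _; exists (scc F q :\ x); split; first exact: chain_push_chain.
move=> P y Y Fp E cP a b aQ' aK bK; have aQ := subsetP Q'Q _ aQ'.
case: (rcons_eq_cat_cons E) => [[EP Ey]|[Y' EX]]; last exact: ni EX cP a b aQ aK bK.
subst P y; rewrite cF in cP; case: cP => EFp; subst Fp; rewrite (scc_eq xD) in aK bK.
apply/negP=> eab; have aF := no_entry_edge_in cF ni QA aQ (subsetP (scc_sub _ _ _) _ bK) eab.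
have aQF : a \in Q :&: F by rewrite inE aQ aF.
by move: (least_ancestral_no_entry QF aQF aK bK); rewrite eab.
Qed.

End Push.

Section Pop.
Variables (P : seq T) (xj : T) (R F : {set T}).
Let X := rcons P xj.
Hypothesis pos : position e g X R.
Hypothesis cF : chain e x0 X = Some F.
Let Q := reach_cl e (avail X) R.
Hypothesis ni : no_entry e x0 X Q.
Hypothesis QF : Q :&: F = set0.

Let xj_notin : xj \notin letters P.
Proof.
have [Fp [cFp xjF _ _]] := chain_rcons_inv cF.
by move: (subsetP (chain_sub cFp) _ xjF); rewrite inE.
Qed.

Lemma chain_pop_letter : pop_letter X = P.
Proof. exact: pop_letter_rcons xj_notin. Qed.

Lemma chain_pop_legal : legal_move X P.
Proof. by rewrite -chain_pop_letter; apply: legal_pop; rewrite -size_eq0 size_rcons. Qed.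

(* Since Q misses F, an edge from Q into xj would enter the component of xj from
   outside. *)
Let no_edge_to_xj a : a \in Q -> ~~ e a xj.
Proof.
have [Fp [cFp xjF _ EF]] := chain_rcons_inv cF.
move=> aQ; apply: (ni (P := P) (Y := [::]) _ cFp aQ); rewrite ?cats1 ?scc_self //.
apply/negP=> aK; have : a \in Q :&: F; last by rewrite QF in_set0.
rewrite inE aQ EF in_setD1 aK andbT; apply: contraTneq (subsetP (reach_cl_sub _ _ _) _ aQ) => ->.
by rewrite avail_rcons !inE eqxx.
Qed.

Lemma chain_pop_step R' : gsucc e g (X, R) (P, R') ->
  [/\ chain_Inv P R', R' \subset R & chain_measure P R' < chain_measure X R].
Proof.
move=> /gsuccP[_ _]; rewrite setIC setC_letters_prefix ?prefix_rcons // => hr.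
have RA : R \subset avail P :\ xj by rewrite -avail_rcons; exact: pos.1.
have noe w : w \in R -> forall a, reachS e (avail P :\ xj) w a -> ~~ e a xj.
  move=> wR a rwa; apply: no_edge_to_xj; rewrite /Q /X avail_rcons.
  exact: reach_cl_reachS (reach_cl_self e RA wR) rwa.
have sub : R' \subset R.
  apply/subsetP=> v' /hr [w wR hw]; apply: (position_closed pos wR); rewrite avail_rcons.
  exact: search_rel_setD1 (subsetP RA _ wR) (noe w wR) hw.
have Q'Q : reach_cl e (avail P) R' \subset Q.
  apply/subsetP=> z; rewrite in_reach_cl => /existsP[u /andP[uR' ruz]].
  have uR := subsetP sub _ uR'; rewrite /Q /X avail_rcons.
  exact: reach_cl_reachS (reach_cl_self e RA uR) (reachS_setD1 (subsetP RA _ uR) (noe u uR) ruz).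
have [Fp [cFp _ _ _]] := chain_rcons_inv cF.
split=> //.
- split; first by have [] := chain_size cFp.
  by move=> _; exists Fp; split=> //; apply: no_entryS Q'Q (no_entry_rcons_inv ni).
- rewrite /chain_measure size_rcons -/Q; have := leq_mul (subset_leq_card Q'Q) (leqnn r.+2).
  lia.
Qed.

End Pop.

Lemma chain_rule_step X R : position e g X R -> chain_Inv X R -> R != set0 ->
  legal_move X (chain_rule X R) /\
  forall R', gsucc e g (X, R) (chain_rule X R, R') ->
    [/\ chain_Inv (chain_rule X R) R', R' \subset R
       & chain_measure (chain_rule X R) R' < chain_measure X R].
Proof.
move=> pos [_ hI] nR; have [F [cF ni]] := hI nR; rewrite /chain_rule cF; clear hI.
case: ifP => [QF|/negbFE/eqP QF].
  by split; [exact: chain_push_legal | exact: chain_push_step].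
case/lastP: X => [|P xj] in pos cF ni QF *.
  move: cF QF => [<-]; rewrite setIT; case/set0Pn: nR => v vR QR.
  by have := reach_cl_self e pos.1 vR; rewrite QR in_set0.
rewrite (chain_pop_letter cF).
by split; [exact: chain_pop_legal cF | exact: chain_pop_step pos cF ni QF].
Qed.

Definition chain_sigma := completed e x0 g chain_rule.

Lemma chain_strategy :
  [/\ strategy e g chain_sigma, winning e g chain_sigma, monotone e g chain_sigma
    & uses_at_most e g chain_sigma r.+1].
Proof.
rewrite /chain_sigma.
have I0 : chain_Inv [::] setT by split=> // _; exists setT; split=> //; exact: no_entry_nil.
have Ispecial R : special e g ([::], setT) -> position e g [::] R -> chain_Inv [::] R.
  by move=> _ _; split=> // _; exists setT; split=> //; exact: no_entry_nil.
have Idefault X : chain_Inv X set0 -> chain_Inv (default_move x0 X) set0.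
  case=> hX _; split; last by rewrite eqxx.
  by apply: leq_trans (size_default_move x0 X) _; rewrite geq_max hX.
have [w m u] := completed_measure_argument I0 (fun X R (h : chain_Inv X R) => h.1)
  Ispecial Idefault chain_rule_step.
by split=> //; exact: completed_strategy.
Qed.

End ChainStrategy.

Theorem theorem1 (T : finType) (e : rel T) (Hirr : irreflexive e) (Hne : 0 < #|T|) :
  let c := (cycle_rank e).+1 in
  lifo_is e Gi true c /\ lifo_is e Gi false c /\
  lifo_is e Gisc true c /\ lifo_is e Gisc false c /\
  lifo_is e Gv true c /\ lifo_is e Gv false c /\
  lifo_is e Gvsc true c /\ lifo_is e Gvsc false c /\
  sstat_is e c.
Proof.
move=> c; case/card_gt0P: Hne => x0 _.
have Ec : c = (cr e setT).+1 by rewrite /c /cycle_rank /cr cardsT.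
have lower g sigma k :
    strategy e g sigma -> winning e g sigma -> uses_at_most e g sigma k -> c <= k.
  by rewrite Ec; exact: searchers_gt_cr Hirr x0 g sigma k.
have lifo g mono : lifo_is e g mono c.
  split=> [|k [sigma [str win _ use]]]; last exact: lower str win use.
  have [str win mon use] := chain_strategy e x0 g.
  by exists (chain_sigma e x0 g); rewrite Ec.
do 8 (split; first exact: lifo).
split=> [|k [sigma [str win _ use]]]; last exact: lower str win use.
have [str win mon use stat] := vsc_strategy e x0.
by exists (vsc_sigma e x0); rewrite Ec.
Qed.
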